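(* In the setting of the context, suppose the algorithm described there terminates after $N$ steps, i.e. $CB^{(N)}=0$. Then the returned matrix $B$ (the non-zero columns of $B^{(N)}$) represents a partition of unity: every row of $B$ sums to $1$.
   Context: Multi-patch setting: $\Omega\subset\mathbb{R}^2$ is the union of closures of $K$ pairwise disjoint patches $\Omega_k=G_k((0,1)^2)$; on each patch there is a local basis $\Phi^{(k)}=(\phi_i^{(k)})_{i=1}^{n^{(k)}}$ obtained by mapping tensor-product B-splines (degree $p$, open knot vectors) via $G_k$. Any two patches sharing an edge $\Gamma_{k,\ell}=\partial\Omega_k\cap\partial\Omega_\ell$ (of positive length) have nested trace spaces; the closures of two patches intersect in the empty set, a vertex of at least one of them, or an edge of at least one of them; and any two patches meeting at a T-junction share an edge. Let $n^{(pw)}=\sum_kn^{(k)}$ and index the concatenated coefficient vector $\underline u_h=(\underline u_h^{(1)},\ldots,\underline u_h^{(K)})\in\mathbb{R}^{n^{(pw)}}$. Constraint matrix $C$: for every pair of patches $\Omega_k,\Omega_\ell$ sharing an edge $\Gamma$ with $V_h^{(k)}|_\Gamma\subseteq V_h^{(\ell)}|_\Gamma$, and every $i$ with $\phi_i^{(k)}|_\Gamma\not\equiv0$, write $\phi_i^{(k)}=\sum_jE^{(k,\ell)}_{i,j}\phi_j^{(\ell)}$ on $\Gamma$ with nonnegative coefficients with row sums $1$ (knot insertion); then $C$ has a row representing $u_i^{(k)}-\sum_jE^{(k,\ell)}_{i,j}u_j^{(\ell)}=0$. For a matrix $D$ and row $m$ define $\mathcal F_m(D)=\{n: D_{m,n}\ne0,\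 D_{m,n}D_{m,j}\le0\ \forall j\ne n\}$. Algorithm: $B^{(0)}=I$; for $\nu=1,2,\ldots$ until $CB^{(\nu)}=0$: choose $m_\nu,n_\nu$ with $n_\nu\in\mathcal F_{m_\nu}(CB^{(\nu-1)})$, set $R^{(\nu)}=I-\frac{1}{e_{m_\nu}^\top CB^{(\nu-1)}e_{n_\nu}}e_{n_\nu}e_{m_\nu}^\top CB^{(\nu-1)}$, $B^{(\nu)}=B^{(\nu-1)}R^{(\nu)}$. Return $B$ = the non-zero columns of $B^{(N)}$, $N$ the first index with $CB^{(N)}=0$. *)

From HB Require Import structures.
From mathcomp Require Import all_boot all_order all_algebra.
Set Implicit Arguments. Unset Strict Implicit. Unset Printing Implicit Defensive.
Import Order.TTheory GRing.Theory Num.Theory.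
Local Open Scope ring_scope.

Definition npw (K : nat) (nk : 'I_K -> nat) : nat := (\sum_(k < K) nk k)%N.

Lemma gidx_lt (K : nat) (nk : 'I_K -> nat) (k : 'I_K) (i : 'I_(nk k)) :
  ((\sum_(k' < K | (k' < k)%N) nk k') + i < npw nk)%N.
Proof.
have -> : npw nk = (nk k + \sum_(k' < K | k' != k) nk k')%N by rewrite /npw (bigD1 k).
rewrite [X in (_ < X)%N]addnC -addnS; apply: leq_add; last exact: ltn_ord.
rewrite [X in (X <= _)%N]big_mkcond [X in (_ <= X)%N]big_mkcond /=.
apply: leq_sum => j _; case: ifP => // /ltn_eqF.
by rewrite -[(j == k :> nat)]/(j == k) => ->.
Qed.

(* Global index of the i-th local basis function phi_i^(k) in the
   concatenated coefficient vector (u^(1), ..., u^(K)). *)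
Definition gidx (K : nat) (nk : 'I_K -> nat) (k : 'I_K) (i : 'I_(nk k))
  : 'I_(npw nk) := Ordinal (gidx_lt i).

(* A row of the constraint matrix C:  u_i^(k) - sum_j E_{i,j}^(k,l) u_j^(l) = 0,
   with E nonnegative with row sum 1 (knot insertion), k <> l. *)
Definition constraint_row (R : numDomainType) (K : nat) (nk : 'I_K -> nat)
    (c : 'rV[R]_(npw nk)) : Prop :=
  exists (k l : 'I_K) (i : 'I_(nk k)) (E : 'I_(nk l) -> R),
    [/\ k != l,
        (forall j, 0 <= E j),
        \sum_(j < nk l) E j = 1 &
        c = delta_mx 0 (gidx i) - \sum_(j < nk l) E j *: delta_mx 0 (gidx j)].

Definition Fset (R : numDomainType) (M n : nat) (D : 'M[R]_(M, n)) (m : 'I_M)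
  : {set 'I_n} :=
  [set c | (D m c != 0) && [forall j, (j != c) ==> (D m c * D m j <= 0)]].

Definition Rstep (R : fieldType) (M n : nat) (C : 'M[R]_(M, n)) (B : 'M[R]_n)
    (m : 'I_M) (c : 'I_n) : 'M[R]_n :=
  1%:M - ((C *m B) m c)^-1 *: (delta_mx c m *m (C *m B)).

Fixpoint Biter (R : fieldType) (M n : nat) (C : 'M[R]_(M, n))
    (ms : nat -> 'I_M) (ns : nat -> 'I_n) (nu : nat) : 'M[R]_n :=
  match nu with
  | 0 => 1%:M
  | nu'.+1 => let Bp := Biter C ms ns nu' in Bp *m Rstep C Bp (ms nu) (ns nu)
  end.

Definition nzcols (R : ringType) (p q : nat) (A : 'M[R]_(p, q)) : {set 'I_q} :=
  [set j | col j A != 0].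

Definition nonzero_cols (R : ringType) (p q : nat) (A : 'M[R]_(p, q))
  : 'M[R]_(p, #|nzcols A|) :=
  colsub (fun j : 'I_#|nzcols A| => enum_val j) A.

(** The constraints are homogeneous and each of them has coefficients summing to
    zero (knot insertion preserves constants), so [C *m 1 = 0] for the all-ones
    vector [1].  Every step matrix [R = I - s e_n e_m^T C B] fixes each vector [v]
    with [C B v = 0]; hence, inductively, [B^(nu) 1 = 1] for all [nu]: the row
    sums of [B^(nu)] are [1], whatever the pivots and whether or not the
    algorithm has terminated.  Removing zero columns does not change row sums. *)

From HB Require Import structures.
From mathcomp Require Import all_boot all_order all_algebra.
Import Order.TTheory GRing.Theory Num.Theory.
Local Open Scope ring_scope.

Lemma constraint_row_mul_const1 (R : numDomainType) (K : nat) (nk : 'I_K -> nat)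
    (p : nat) (c : 'rV[R]_(npw nk)) :
  constraint_row c -> c *m (const_mx 1 : 'M_(npw nk, p)) = 0.
Proof.
have delta_const1 g : (delta_mx 0 g : 'rV[R]_(npw nk)) *m const_mx 1 = const_mx 1.
  by rewrite -rowE row_const.
move=> [k [l [i [E [_ _ sumE1 ->]]]]].
rewrite mulmxBl mulmx_suml delta_const1.
under eq_bigr => j _ do rewrite -scalemxAl delta_const1.
by rewrite -scaler_suml sumE1 scale1r subrr.
Qed.

Lemma constraint_mx_mul_const1 (R : numDomainType) (K : nat) (nk : 'I_K -> nat)
    (M p : nat) (C : 'M[R]_(M, npw nk)) :
  (forall r : 'I_M, constraint_row (row r C)) ->
  C *m (const_mx 1 : 'M_(npw nk, p)) = 0.
Proof.
move=> HC; apply/row_matrixP => r.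
by rewrite row_mul row0 constraint_row_mul_const1.
Qed.

Lemma Rstep_mul_ker (R : fieldType) (M n p : nat) (C : 'M[R]_(M, n))
    (B : 'M[R]_n) (m : 'I_M) (c : 'I_n) (v : 'M[R]_(n, p)) :
  C *m (B *m v) = 0 -> Rstep C B m c *m v = v.
Proof.
move=> CBv0.
by rewrite /Rstep mulmxBl mul1mx -scalemxAl -!mulmxA CBv0 mulmx0 scaler0 subr0.
Qed.

Lemma Biter_mul_ker (R : fieldType) (M n p : nat) (C : 'M[R]_(M, n))
    (ms : nat -> 'I_M) (ns : nat -> 'I_n) (v : 'M[R]_(n, p)) (nu : nat) :
  C *m v = 0 -> Biter C ms ns nu *m v = v.
Proof.
move=> Cv0; elim: nu => [|nu IH] /=; first by rewrite mul1mx.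
by rewrite -mulmxA Rstep_mul_ker ?IH.
Qed.

Lemma nonzero_cols_row_sum (R : ringType) (p q : nat) (A : 'M[R]_(p, q)) (r : 'I_p) :
  \sum_(j < #|nzcols A|) nonzero_cols A r j = \sum_(j < q) A r j.
Proof.
under eq_bigr => j _ do rewrite mxE.
rewrite -(big_enum_val (fun j => A r j)) /= [RHS](bigID (mem (nzcols A))) /=.
rewrite [X in _ = _ + X]big1 ?addr0 // => j.
rewrite inE negbK => /eqP zero_colj.
by have := congr1 (fun v : 'cV_p => v r 0) zero_colj; rewrite !mxE.
Qed.

Lemma row_sum_mul_const1 (R : ringType) (p q : nat) (A : 'M[R]_(p, q)) (r : 'I_p) :
  \sum_(j < q) A r j = (A *m (const_mx 1 : 'cV_q)) r 0.
Proof. by rewrite mxE; apply: eq_bigr => j _; rewrite mxE mulr1. Qed.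

Theorem mainTheorem6 (R : realFieldType) (K : nat) (nk : 'I_K -> nat) (M : nat)
    (C : 'M[R]_(M, npw nk))
    (HC : forall r : 'I_M, constraint_row (row r C))
    (ms : nat -> 'I_M) (ns : nat -> 'I_(npw nk)) (N : nat)
    (Hpiv : forall nu : nat, (0 < nu <= N)%N ->
              ns nu \in Fset (C *m Biter C ms ns nu.-1) (ms nu))
    (Hrun : forall nu : nat, (nu < N)%N -> C *m Biter C ms ns nu != 0)
    (Hterm : C *m Biter C ms ns N = 0) :
  forall r : 'I_(npw nk),
    \sum_(j < #|nzcols (Biter C ms ns N)|) nonzero_cols (Biter C ms ns N) r j = 1.
Proof.
move=> r.
rewrite nonzero_cols_row_sum row_sum_mul_const1.
by rewrite Biter_mul_ker ?constraint_mx_mul_const1 // mxE.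
Qed.
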